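(* Let $\alpha$ be a positive irrational number and let $R,S$ be positive rational numbers with $\frac{R}{S}>\alpha$. Define the genitor $$g_\alpha(R,S)=\left\lfloor \frac{\alpha-\lfloor\alpha\rfloor}{R-\alpha S}\right\rfloor .$$ If $g_\alpha(R,S)$ is positive, then, writing $g=g_\alpha(R,S)$, $$\lfloor\alpha\rfloor < \frac{R g+\lfloor\alpha\rfloor}{S g+1} < \alpha < \frac{R (g+1)+\lfloor\alpha\rfloor}{S (g+1)+1}<\frac{R}{S}.$$
   Context: $\lfloor\cdot\rfloor$ denotes the floor function. *)

From Stdlib Require Import Reals QArith Lra Lia ZArith.
Open Scope R_scope.

(* Rfloorz x = floor x, the unique integer n with n <= x < n+1; [up x] is the unique integer
   with x < up x <= x + 1, so Rfloorz x = up x - 1. *)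
Definition Rfloorz (x : R) : Z := (up x - 1)%Z.

Definition is_rational (x : R) : Prop := exists q : Q, Q2R q = x.
Definition irrational (x : R) : Prop := ~ is_rational x.

Definition genitor (alpha r s : R) : Z :=
  Rfloorz ((alpha - IZR (Rfloorz alpha)) / (r - alpha * s)).

From Stdlib Require Import Reals ZArith QArith Qreals Lra.
Open Scope R_scope.

(* With D := r - alpha s > 0, the genitor g is the floor of (alpha - floor alpha) / D, so
   g D <= alpha - floor alpha < (g + 1) D, and the first inequality is strict because
   equality would make alpha = (r g + floor alpha) / (s g + 1) rational.  For k >= 0 the
   numerator of (r k + floor alpha) / (s k + 1) - alpha is k D - (alpha - floor alpha), so
   the two bounds place alpha strictly between the fractions for k = g and k = g + 1.
   Both fractions are mediants of floor alpha / 1 and r / s, hence lie strictly between. *)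

Lemma Rfloorz_spec (x : R) : IZR (Rfloorz x) <= x < IZR (Rfloorz x) + 1.
Proof.
  unfold Rfloorz. destruct (archimed x) as [Hup1 Hup2].
  rewrite minus_IZR. simpl. lra.
Qed.

Lemma Rfloorz_div_bounds (x d : R) : 0 < d ->
  IZR (Rfloorz (x / d)) * d <= x < (IZR (Rfloorz (x / d)) + 1) * d.
Proof.
  intros Hd. destruct (Rfloorz_spec (x / d)) as [Hlo Hhi].
  assert (Hx : x / d * d = x) by (field; lra).
  split.
  - rewrite <- Hx at 2. apply Rmult_le_compat_r; lra.
  - rewrite <- Hx at 1. apply Rmult_lt_compat_r; lra.
Qed.

Lemma is_rational_IZR (z : Z) : is_rational (IZR z).
Proof. exists (inject_Z z). unfold Q2R, inject_Z. simpl. field. Qed.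

Lemma is_rational_plus (x y : R) : is_rational x -> is_rational y -> is_rational (x + y).
Proof. intros [p <-] [q <-]. exists (p + q)%Q. apply Q2R_plus. Qed.

Lemma is_rational_mult (x y : R) : is_rational x -> is_rational y -> is_rational (x * y).
Proof. intros [p <-] [q <-]. exists (p * q)%Q. apply Q2R_mult. Qed.

Lemma is_rational_div (x y : R) :
  is_rational x -> is_rational y -> y <> 0 -> is_rational (x / y).
Proof.
  intros [p <-] [q <-] Hq. exists (p / q)%Q. apply Q2R_div.
  intros Hq0. apply Hq. rewrite (Qeq_eqR _ _ Hq0). unfold Q2R. simpl. field.
Qed.

Lemma is_rational_mediant (r s : R) (k m : Z) :
  is_rational r -> is_rational s -> s * IZR k + 1 <> 0 ->
  is_rational ((r * IZR k + IZR m) / (s * IZR k + 1)).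
Proof.
  intros Hr Hs Hden. apply is_rational_div; [| |exact Hden];
    apply is_rational_plus; try apply is_rational_mult; auto using is_rational_IZR.
Qed.

Lemma div_lt_iff (a b c : R) : 0 < b -> (a / b < c <-> a < c * b).
Proof.
  intros Hb. assert (Ha : a / b * b = a) by (field; lra). split; intros H.
  - rewrite <- Ha. apply Rmult_lt_compat_r; lra.
  - apply Rmult_lt_reg_r with b; lra.
Qed.

Lemma lt_div_iff (a b c : R) : 0 < b -> (c < a / b <-> c * b < a).
Proof.
  intros Hb. assert (Ha : a / b * b = a) by (field; lra). split; intros H.
  - rewrite <- Ha. apply Rmult_lt_compat_r; lra.
  - apply Rmult_lt_reg_r with b; lra.
Qed.

Lemma mediant_lt_iff (alpha r s k m : R) : 0 < s * k + 1 ->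
  ((r * k + m) / (s * k + 1) < alpha <-> k * (r - alpha * s) < alpha - m).
Proof. intros Hden. rewrite div_lt_iff by exact Hden. lra. Qed.

Lemma lt_mediant_iff (alpha r s k m : R) : 0 < s * k + 1 ->
  (alpha < (r * k + m) / (s * k + 1) <-> alpha - m < k * (r - alpha * s)).
Proof. intros Hden. rewrite lt_div_iff by exact Hden. lra. Qed.

Lemma div_lt_div_iff (a b c d : R) : 0 < b -> 0 < d -> (a / b < c / d <-> a * d < c * b).
Proof.
  intros Hb Hd. rewrite div_lt_iff by exact Hb.
  replace (c / d * b) with (c * b / d) by (field; lra).
  rewrite lt_div_iff by exact Hd. lra.
Qed.

Lemma mediant_between (a b c d : R) : 0 < b -> 0 < d -> a / b < c / d ->
  a / b < (a + c) / (b + d) < c / d.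
Proof.
  intros Hb Hd. rewrite !div_lt_div_iff by lra. intros Hcross. split; nra.
Qed.

Lemma mediant_strictly_between (r s m k : R) : 0 < s -> 0 < k -> m * s < r ->
  m < (r * k + m) / (s * k + 1) < r / s.
Proof.
  intros Hs Hk Hms.
  assert (Hrk : r / s = r * k / (s * k)) by (field; lra).
  assert (Hm : m = m / 1) by field.
  assert (Hlt : m / 1 < r * k / (s * k)).
  { rewrite <- Hrk, <- Hm. rewrite lt_div_iff by exact Hs. exact Hms. }
  destruct (mediant_between m 1 (r * k) (s * k) Rlt_0_1 ltac:(nra) Hlt) as [H1 H2].
  replace ((r * k + m) / (s * k + 1)) with ((m + r * k) / (1 + s * k)) by (f_equal; ring).
  lra.
Qed.

Theorem proposition1 (alpha r s : R) :
  0 < alpha -> irrational alpha ->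
  is_rational r -> is_rational s -> 0 < r -> 0 < s ->
  r / s > alpha ->
  (0 < genitor alpha r s)%Z ->
  let g := IZR (genitor alpha r s) in
  let fa := IZR (Rfloorz alpha) in
  fa < (r * g + fa) / (s * g + 1) /\
  (r * g + fa) / (s * g + 1) < alpha /\
  alpha < (r * (g + 1) + fa) / (s * (g + 1) + 1) /\
  (r * (g + 1) + fa) / (s * (g + 1) + 1) < r / s.
Proof.
  intros _ Hirr Hr Hs _ Hs0 Hrs Hg g fa.
  assert (Hg0 : 0 < g) by (apply IZR_lt; exact Hg).
  assert (Hfa : fa <= alpha) by apply Rfloorz_spec.
  assert (HD : 0 < r - alpha * s) by (unfold Rgt in Hrs; rewrite lt_div_iff in Hrs; lra).
  destruct (Rfloorz_div_bounds (alpha - fa) _ HD) as [Hlo Hhi].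
  change (IZR (Rfloorz ((alpha - fa) / (r - alpha * s)))) with g in Hlo, Hhi.
  assert (Hlt : g * (r - alpha * s) < alpha - fa).
  { destruct Hlo as [Hlt | Heq]; [exact Hlt|]. exfalso. apply Hirr.
    assert (Hden : s * g + 1 <> 0) by nra.
    replace alpha with ((r * g + fa) / (s * g + 1)) by (field_simplify_eq; [nra|exact Hden]).
    exact (is_rational_mediant r s _ _ Hr Hs Hden). }
  assert (Hfs : fa * s < r).
  { assert (fa * s <= alpha * s) by (apply Rmult_le_compat_r; lra). lra. }
  destruct (mediant_strictly_between r s fa g Hs0 Hg0 Hfs) as [Hlow _].
  destruct (mediant_strictly_between r s fa (g + 1) Hs0 ltac:(lra) Hfs) as [_ Hhigh].
  repeat split; trivial.
  - apply mediant_lt_iff; [nra|lra].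
  - apply lt_mediant_iff; [nra|lra].
Qed.
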